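(* In the bug bounty model described in the context, $nF(\hat c_n^* )\to\hat\kappa^*$ as $n\to\infty$, where $\hat c_n^*=\min\{\tilde c_n,c_{a,n}(\overline v)\}$ is the optimal equilibrium threshold of the private program with $n$ agents and $\hat\kappa^*=\min\{\tilde\kappa,\kappa_a(\overline v)\}$ is the optimal asymptotic participation of the public program.
   Context: There are $L$ potential organic bugs; bug $l$ exists with probability $\mu^l\in(0,1]$ (independently), has complexity $q^l\in(0,1]$, and the designer values finding it at $w^l\ge0$. Agents' costs are i.i.d. from a fixed continuous distribution $F$ with full support $[\underline c,\overline c]$, $0<\underline c<\overline c\le\infty$, finite density $f$, $F/f$ non-decreasing. Budget $\overline v>0$ with $\overline v\ge\underline c$; $\sum_lw^l\mu^lq^l\ge\underline c$. A searching agent finds each existing bug of complexity $q$ with probability $q$, independently; a found bug's prize goes to one of its finders chosen uniformly at random. With $n$ agents, $\Phi_n(\hat c;q)$ is the probability that a searching agent wins the prize of an existing bug of complexity $q$ when each of the other $n-1$ agents searches iff his/her cost is at most $\hat c$. $\tilde c_n$ is the unique fixed point of $\Omega_n(\hat c)=\sum_lw^l\mu^lq^l(1-q^lF(\hat c))^{n-1}-F(\hat c)/f(\hat c)$, and $c_{a,n}(\overline v)$ is the unique fixed point of $\hat c\mapsto\overline v\Phi_n(\hat c;1)$. $\tilde\kappa$ is the unique root in $[0,\infty)$ of $\sum_lw^l\mu^lq^le^{-q^l\hat\kappa}-\underline c$, and $\kappa_a(\overline v)$ is the largest fixed point in $[0,\infty)$ of $\hat\kappa\mapsto\overline v(1-e^{-\hat\kappa})/\underline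 c$. *)

From Stdlib Require Import Reals List.
From Coquelicot Require Import Coquelicot.
Open Scope R_scope.

Definition sumL (n : nat) (g : nat -> R) : R :=
  fold_right (fun k acc => g k + acc) 0 (seq 0 n).

(* Phi n F c qq : probability that a searching agent wins the prize of an
   existing bug of complexity qq, when each of the other n-1 agents searches
   iff his cost is at most c (costs i.i.d. with cdf F).  The agent finds the bug
   with prob. qq; each other agent independently searches and finds it with
   prob. p = qq * F c; with K ~ Bin(n-1, p) other finders, the prize goes to
   the agent with probability 1/(K+1). *)
Definition Phi (n : nat) (F : R -> R) (c qq : R) : R :=
  let p := qq * F c in
  qq * sumL n (fun k =>
     Binomial.C (n - 1) k * p ^ k * (1 - p) ^ (n - 1 - k) / INR (k + 1)).

Definition Omega (L : nat) (w mu q : nat -> R) (F f : R -> R) (n : nat) (c : R)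
  : R :=
  sumL L (fun l => w l * mu l * q l * (1 - q l * F c) ^ (n - 1)) - F c / f c.

Definition in_supp (c_lo : R) (c_hi : Rbar) (x : R) : Prop :=
  c_lo <= x /\ Rbar_le (Finite x) c_hi.

(* Write [k_n = n F(c_n)] and [p_n = F(c_n)].  For the public threshold, the identity
   [n p Phi_n = 1 - (1 - p)^n] and [(1 - p)^n = e^(-k) + O(k p)] give
   [c_n = vbar (1 - e^(-k_n)) / k_n + O(p_n)]; for the private threshold, likewise
   [c_n + F(c_n)/f(c_n) = sum_l w mu q e^(-q k_n) + O(k_n p_n)].  Both right-hand sides
   are strictly decreasing in [k] and take the value [c_lo] exactly at [kappa_a] resp.
   [kappa~].  Since [c_n >= c_lo], [k_n] stays bounded, so [p_n -> 0]; as [F > 0] to the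
   right of [c_lo] this forces [c_n -> c_lo], and monotonicity of [F/f] forces
   [F(c_n)/f(c_n) -> 0].  Hence the decreasing functions at [k_n] tend to [c_lo], and [k_n]
   converges to the root.  Monotonicity of [F] turns [n F(min)] into the min of the two. *)

From Stdlib Require Import Reals List Lra Lia Psatz Classical ClassicalEpsilon.
From Coquelicot Require Import Coquelicot.
Open Scope R_scope.

Lemma sumL_S n g : sumL (S n) g = sumL n g + g n.
Proof.
  unfold sumL. rewrite seq_S, fold_right_app. simpl.
  induction (seq 0 n) as [|x s IH]; simpl; lra.
Qed.

Lemma sumL_le n g h : (forall k, (k < n)%nat -> g k <= h k) -> sumL n g <= sumL n h.
Proof.
  induction n as [|n IH]; intros Hgh; [unfold sumL; simpl; lra|].
  rewrite !sumL_S. assert (g n <= h n) by (apply Hgh; lia).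
  enough (sumL n g <= sumL n h) by lra. apply IH; intros k Hk; apply Hgh; lia.
Qed.

Lemma sumL_lt n g h : (forall k, (k < n)%nat -> g k <= h k) ->
  (exists k, (k < n)%nat /\ g k < h k) -> sumL n g < sumL n h.
Proof.
  induction n as [|n IH]; intros Hgh [k [Hk Hlt]]; [lia|].
  rewrite !sumL_S. assert (g n <= h n) by (apply Hgh; lia).
  destruct (Nat.eq_dec k n) as [->|Hne].
  - enough (sumL n g <= sumL n h) by lra. apply sumL_le; intros; apply Hgh; lia.
  - enough (sumL n g < sumL n h) by lra.
    apply IH; [intros; apply Hgh; lia | exists k; split; [lia | exact Hlt]].
Qed.

Lemma sumL_pos_term n g : 0 < sumL n g -> exists k, (k < n)%nat /\ 0 < g k.
Proof.
  intros Hpos. apply NNPP. intros Hnone.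
  assert (sumL n g <= sumL n (fun _ => 0)).
  { apply sumL_le. intros k Hk. apply Rnot_lt_le. intros Hg. apply Hnone. now exists k. }
  assert (Hzero : forall m, sumL m (fun _ => 0) = 0)
    by (induction m; [reflexivity | rewrite sumL_S, IHm; ring]).
  rewrite Hzero in *. lra.
Qed.

Lemma sumL_plus_scal n c g h :
  sumL n (fun k => g k + c * h k) = sumL n g + c * sumL n h.
Proof. induction n; [unfold sumL; simpl; ring | rewrite !sumL_S, IHn; ring]. Qed.

Lemma sumL_sum_f_R0 n g : sumL (S n) g = sum_f_R0 g n.
Proof. induction n; rewrite sumL_S; [unfold sumL; simpl; ring | rewrite IHn; reflexivity]. Qed.

Lemma pow_sub_pow_le x y m : 0 <= y <= x -> x <= 1 -> x ^ m - y ^ m <= INR m * (x - y).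
Proof.
  intros Hyx Hx. induction m as [|m IH]; [simpl; lra|].
  rewrite S_INR. simpl.
  assert (y ^ m <= x ^ m) by (apply pow_incr; lra).
  assert (x ^ m <= 1) by (rewrite <- (pow1 m); apply pow_incr; lra).
  assert (0 <= y ^ m) by (apply pow_le; lra).
  nra.
Qed.

Lemma exp_le_compat x y : x <= y -> exp x <= exp y.
Proof. intros [Hlt | ->]; [left; apply exp_increasing; exact Hlt | lra]. Qed.

Lemma exp_opp_pow t m : exp (- t) ^ m = exp (- (INR m * t)).
Proof.
  induction m as [|m IH]; [simpl; rewrite Rmult_0_l, Ropp_0, exp_0; reflexivity|].
  rewrite S_INR. simpl. rewrite IH, <- exp_plus. f_equal. ring.
Qed.

Lemma exp_opp_le_quadratic t : 0 <= t -> exp (- t) <= 1 - t + t * t.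
Proof.
  intros Ht. rewrite exp_Ropp.
  assert (1 + t <= exp t) by apply exp_ineq1_le.
  apply (Rmult_le_reg_l (exp t)); [apply exp_pos|].
  rewrite Rinv_r by (apply Rgt_not_eq, exp_pos).
  assert (0 < 1 - t + t * t) by nra.
  assert ((1 + t) * (1 - t + t * t) <= exp t * (1 - t + t * t))
    by (apply Rmult_le_compat_r; lra).
  nra.
Qed.

Lemma one_sub_pow_bounds t m : 0 <= t <= 1 ->
  exp (- (INR m * t)) - INR m * (t * t) <= (1 - t) ^ m <= exp (- (INR m * t)).
Proof.
  intros Ht. rewrite <- exp_opp_pow.
  assert (Hlo : 1 - t <= exp (- t)) by (pose proof (exp_ineq1_le (- t)); lra).
  assert (Hhi : exp (- t) <= 1) by (rewrite <- exp_0; apply exp_le_compat; lra).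
  split.
  - assert (exp (- t) ^ m - (1 - t) ^ m <= INR m * (exp (- t) - (1 - t)))
      by (apply pow_sub_pow_le; lra).
    assert (INR m * (exp (- t) - (1 - t)) <= INR m * (t * t)).
    { apply Rmult_le_compat_l; [apply pos_INR|]. pose proof (exp_opp_le_quadratic t). lra. }
    lra.
  - apply pow_incr. lra.
Qed.

Lemma binomial_succ_div m k : (k <= m)%nat ->
  INR (S m) * Binomial.C m k / INR (S k) = Binomial.C (S m) (S k).
Proof.
  intros Hk. unfold Binomial.C.
  replace (S m - S k)%nat with (m - k)%nat by lia.
  rewrite (fact_simpl m), (fact_simpl k), !mult_INR.
  pose proof (INR_fact_neq_0 m). pose proof (INR_fact_neq_0 k).
  pose proof (INR_fact_neq_0 (m - k)). pose proof (not_0_INR (S k) (Nat.neq_succ_0 k)).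
  field. auto.
Qed.

Lemma binomial_n_0 n : Binomial.C n 0 = 1.
Proof.
  unfold Binomial.C. rewrite Nat.sub_0_r.
  replace (INR (Factorial.fact 0)) with 1 by reflexivity.
  field. apply INR_fact_neq_0.
Qed.

(* [C(m,k) / (k+1) = C(m+1,k+1) / (m+1)] turns [n p Phi] into the binomial expansion of
   [(p + (1 - p))^n] without its [k = 0] term. *)
Lemma Phi_mul n F c : (1 <= n)%nat -> INR n * F c * Phi n F c 1 = 1 - (1 - F c) ^ n.
Proof.
  intros Hn. destruct n as [|m]; [lia|]. unfold Phi.
  replace (1 * F c) with (F c) by ring. set (p := F c).
  rewrite Rmult_1_l, sumL_sum_f_R0. replace (S m - 1)%nat with m by lia.
  pose proof (binomial p (1 - p) (S m)) as Hbin.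
  replace (p + (1 - p)) with 1 in Hbin by ring. rewrite pow1 in Hbin.
  rewrite decomp_sum in Hbin by lia. simpl Init.Nat.pred in Hbin.
  rewrite binomial_n_0, Nat.sub_0_r in Hbin.
  enough (INR (S m) * p * sum_f_R0
      (fun k => Binomial.C m k * p ^ k * (1 - p) ^ (m - k) / INR (k + 1)) m
    = sum_f_R0 (fun i => Binomial.C (S m) (S i) * p ^ S i * (1 - p) ^ (S m - S i)) m)
    by (simpl (p ^ 0) in Hbin; lra).
  rewrite scal_sum. apply sum_eq. intros i Hi.
  rewrite <- binomial_succ_div by lia. replace (i + 1)%nat with (S i) by lia.
  replace (S m - S i)%nat with (m - i)%nat by lia. simpl (p ^ S i).
  field. apply not_0_INR. lia.
Qed.

Lemma Phi_F_zero n F c : (1 <= n)%nat -> F c = 0 -> Phi n F c 1 = 1.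
Proof.
  intros Hn Hc. destruct n as [|m]; [lia|]. unfold Phi. rewrite Hc.
  replace (S m - 1)%nat with m by lia.
  assert (Hfirst : forall j, sumL (S j) (fun k =>
      Binomial.C m k * (1 * 0) ^ k * (1 - 1 * 0) ^ (m - k) / INR (k + 1)) = 1).
  { induction j as [|j IH].
    - unfold sumL. simpl. rewrite binomial_n_0, Rmult_0_r, Rminus_0_r, pow1. field.
    - rewrite sumL_S, IH. rewrite Rmult_0_r, pow_i by lia. unfold Rdiv. ring. }
  rewrite Hfirst. ring.
Qed.

Lemma is_RInt_Riemann_sum_close (f : R -> R) u v I : u < v -> is_RInt f u v I ->
  forall eps, 0 < eps -> exists d : posreal, forall ptd,
    pointed_subdiv ptd -> SF_h ptd = u -> seq.last (SF_h ptd) (SF_lx ptd) = v ->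
    seq_step (SF_lx ptd) < d -> Rabs (Riemann_sum f ptd - I) < eps.
Proof.
  intros Huv HI eps Heps.
  destruct (HI _ (locally_ball I (mkposreal eps Heps))) as [d Hd].
  exists d. intros ptd Hptd Hh Hl Hstep.
  specialize (Hd ptd Hstep). rewrite Rmin_left, Rmax_right, sign_eq_1 in Hd by lra.
  specialize (Hd (conj Hptd (conj Hh Hl))).
  unfold ball in Hd; simpl in Hd; unfold AbsRing_ball, abs, minus, plus, opp, scal in Hd.
  simpl in Hd; unfold mult in Hd; simpl in Hd. rewrite Rmult_1_l in Hd. exact Hd.
Qed.

Lemma Riemann_sum_f2_ge (f : R -> R) (T : R -> R -> R) u v eta :
  (forall x y, u <= x <= y -> y <= v -> eta * (y - x) <= (y - x) * f (T x y)) ->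
  forall l x0, u <= x0 -> sorted Rle (x0 :: l) -> seq.last x0 l <= v ->
  eta * (seq.last x0 l - x0) <= Riemann_sum f (SF_seq_f2 T (x0 :: l)).
Proof.
  intros Hcell l. induction l as [|y l IH]; intros x0 Hx0 Hsort Hlast.
  - simpl. rewrite Rminus_diag, Rmult_0_r. right. reflexivity.
  - destruct Hsort as [Hxy Hsort].
    assert (Hy : y <= seq.last y l) by exact (sorted_last (y :: l) 0 Hsort ltac:(simpl; lia) y).
    rewrite SF_cons_f2 by (simpl; lia). rewrite Riemann_sum_cons.
    specialize (IH y ltac:(lra) Hsort Hlast).
    specialize (Hcell x0 y ltac:(lra) ltac:(simpl in Hlast; lra)).
    simpl in *. unfold plus, scal; simpl; unfold mult; simpl. lra.
Qed.

Lemma is_RInt_small_subinterval (f : R -> R) u v I eta :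
  u < v -> is_RInt f u v I -> I < eta * (v - u) ->
  exists x y, (u <= x /\ x < y <= v) /\ forall t, x <= t <= y -> f t < eta.
Proof.
  intros Huv HI Hsmall. apply NNPP. intros Hnone.
  assert (Hbig : forall x y, u <= x /\ x < y /\ y <= v -> exists t, x <= t <= y /\ eta <= f t).
  { intros x y Hxy. apply NNPP. intros Hno. apply Hnone. exists x, y. split; [exact Hxy|].
    intros t Ht. apply Rnot_le_lt. intros Hle. apply Hno. now exists t. }
  set (T x y := epsilon (inhabits x)
                  (fun t => x <= t <= y /\ (u <= x /\ x < y /\ y <= v -> eta <= f t))).
  assert (HT : forall x y, x <= y ->
                 x <= T x y <= y /\ (u <= x /\ x < y /\ y <= v -> eta <= f (T x y))).
  { intros x y Hxy. apply epsilon_spec.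
    destruct (classic (u <= x /\ x < y /\ y <= v)) as [Hin | Hout].
    - destruct (Hbig x y Hin) as [t Ht]. exists t. tauto.
    - exists x. split; [lra | tauto]. }
  destruct (is_RInt_Riemann_sum_close f u v I Huv HI (eta * (v - u) - I)) as [d Hd]; [lra|].
  destruct (seq_step_unif_part_ex u v d) as [n Hn].
  destruct (Riemann_fine_unif_part T u v n (fun x y Hxy => proj1 (HT x y Hxy)) ltac:(lra))
    as [_ [Hptd [Hh Hl]]].
  assert (Hsize : (0 < seq.size (unif_part u v n))%nat)
    by (unfold unif_part; rewrite seq.size_mkseq; lia).
  specialize (Hd _ Hptd Hh Hl). rewrite SF_lx_f2 in Hd by exact Hsize. specialize (Hd Hn).
  destruct (unif_part u v n) as [|x0 l] eqn:Hpart; [simpl in Hsize; lia|].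
  assert (Hx0 : x0 = u) by (rewrite <- (head_unif_part 0 u v n), Hpart; reflexivity).
  assert (Hlast : seq.last x0 l = v) by (rewrite <- (last_unif_part 0 u v n), Hpart; reflexivity).
  assert (Hsort : sorted Rle (x0 :: l)) by (rewrite <- Hpart; apply unif_part_sort; lra).
  assert (Hcell : forall x y, u <= x <= y -> y <= v -> eta * (y - x) <= (y - x) * f (T x y)).
  { intros x y Hx Hy. destruct (Req_dec x y) as [<- | Hne]; [lra|].
    assert (eta <= f (T x y)) by (apply (HT x y); lra). nra. }
  pose proof (Riemann_sum_f2_ge f T u v eta Hcell l x0 ltac:(lra) Hsort ltac:(lra)) as Hge.
  rewrite Hlast in Hge. subst x0. apply Rabs_def2 in Hd. lra.
Qed.

Lemma nested_intervals_meet (x y : nat -> R) :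
  (forall k, x k <= x (S k)) -> (forall k, y (S k) <= y k) -> (forall k, x k <= y k) ->
  exists m, forall k, x k <= m <= y k.
Proof.
  intros Hx Hy Hxy.
  assert (Hle : forall j k, x j <= y k).
  { intros j k. pose proof (growing_prop x (Nat.max j k) j Hx ltac:(lia)).
    pose proof (decreasing_prop y k (Nat.max j k) Hy ltac:(lia)).
    specialize (Hxy (Nat.max j k)). lra. }
  destruct (completeness (fun z => exists k, z = x k)) as [m [Hub Hlub]].
  - exists (y 0%nat). intros z [k ->]. apply Hle.
  - exists (x 0%nat). now exists 0%nat.
  - exists m. intros k. split.
    + apply Hub. now exists k.
    + apply Hlub. intros z [j ->]. apply Hle.
Qed.

Lemma RInt_vanishes_on_subintervals (f : R -> R) u v :
  ex_RInt f u v -> (forall t, u <= t <= v -> 0 <= f t) -> RInt f u v <= 0 ->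
  forall x y, u <= x -> x < y -> y <= v -> is_RInt f x y 0.
Proof.
  intros Hex Hpos Hle x y Hx Hxy Hy.
  assert (Hnonneg : forall s t, u <= s -> s <= t -> t <= v -> ex_RInt f s t -> 0 <= RInt f s t)
    by (intros s t Hs Hst Ht Hint; apply RInt_ge_0; auto; intros z Hz; apply Hpos; lra).
  assert (Hux : ex_RInt f u x) by (apply (ex_RInt_Chasles_1 f u x v); [lra | exact Hex]).
  assert (Hxv : ex_RInt f x v) by (apply (ex_RInt_Chasles_2 f u); [lra | exact Hex]).
  assert (Hxy' : ex_RInt f x y) by (apply (ex_RInt_Chasles_1 f x y v); [lra | exact Hxv]).
  assert (Hyv : ex_RInt f y v) by (apply (ex_RInt_Chasles_2 f x); [lra | exact Hxv]).
  pose proof (RInt_Chasles f u x v Hux Hxv) as Hsplit1.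
  pose proof (RInt_Chasles f x y v Hxy' Hyv) as Hsplit2.
  unfold plus in Hsplit1, Hsplit2; simpl in Hsplit1, Hsplit2.
  pose proof (Hnonneg u x ltac:(lra) ltac:(lra) ltac:(lra) Hux).
  pose proof (Hnonneg x y ltac:(lra) ltac:(lra) ltac:(lra) Hxy').
  pose proof (Hnonneg y v ltac:(lra) ltac:(lra) ltac:(lra) Hyv).
  replace 0 with (RInt f x y) by lra. exact (RInt_correct f x y Hxy').
Qed.

Lemma RInt_gt_0_of_pos (f : R -> R) u v : u < v -> ex_RInt f u v ->
  (forall t, u <= t <= v -> 0 < f t) -> 0 < RInt f u v.
Proof.
  intros Huv Hex Hpos. apply Rnot_le_lt. intros Hle.
  pose proof (RInt_vanishes_on_subintervals f u v Hex
    ltac:(intros t Ht; left; apply Hpos, Ht) Hle) as Hzero.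
  set (Shrunk k (p p' : R * R) := fst p <= fst p' /\ fst p' < snd p' <= snd p /\
         forall t, fst p' <= t <= snd p' -> f t < / INR (S k)).
  set (shrink k p := epsilon (inhabits p) (Shrunk k p)).
  assert (Hshrink : forall k p, u <= fst p -> fst p < snd p -> snd p <= v ->
                      Shrunk k p (shrink k p)).
  { intros k p H1 H2 H3. apply epsilon_spec.
    assert (Hk : 0 < / INR (S k)) by (apply Rinv_0_lt_compat, lt_0_INR; lia).
    destruct (is_RInt_small_subinterval f (fst p) (snd p) 0 (/ INR (S k)) H2 (Hzero _ _ H1 H2 H3))
      as [x [y [Hxy Hsmall]]]; [nra|].
    exists (x, y). unfold Shrunk; simpl. tauto. }
  set (J := fix J k := match k with O => (u, v) | S k => shrink k (J k) end).
  assert (HJ : forall k, u <= fst (J k) /\ fst (J k) < snd (J k) /\ snd (J k) <= v /\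
                         Shrunk k (J k) (J (S k))).
  { induction k as [|k IH].
    - simpl. split; [lra | split; [lra | split; [lra |]]]. apply (Hshrink 0%nat (u, v)); simpl; lra.
    - destruct IH as [H1 [H2 [H3 [H4 [H5 _]]]]].
      assert (H6 : u <= fst (J (S k)) /\ fst (J (S k)) < snd (J (S k)) /\ snd (J (S k)) <= v)
        by lra.
      split; [lra | split; [lra | split; [lra |]]].
      apply Hshrink; lra. }
  destruct (nested_intervals_meet (fun k => fst (J k)) (fun k => snd (J k))) as [m Hm].
  - intros k. apply HJ.
  - intros k. apply HJ.
  - intros k. left. apply HJ.
  - assert (Hfm : 0 < f m) by (apply Hpos; pose proof (Hm 0%nat); simpl in *; lra).
    destruct (archimed_cor1 (f m) Hfm) as [N [HN HN0]].
    destruct N as [|k]; [lia|].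
    destruct (HJ k) as [_ [_ [_ [_ [_ Hsmall]]]]].
    specialize (Hsmall m (Hm (S k))). lra.
Qed.

Lemma is_lim_seq_0_of_INR_mul_le (p : nat -> R) K :
  eventually (fun n => 0 <= p n /\ INR n * p n <= K) -> is_lim_seq p 0.
Proof.
  intros Hp.
  apply (is_lim_seq_le_le_loc (fun _ => 0) p (fun n => K * / INR n));
    [| apply is_lim_seq_const |].
  - assert (Hn1 : eventually (fun n => (1 <= n)%nat)) by (exists 1%nat; tauto).
    generalize (filter_and _ _ Hp Hn1). apply filter_imp. intros n [[Hp0 HpK] Hn].
    assert (0 < INR n) by (apply lt_0_INR; lia).
    split; [exact Hp0|]. apply (Rmult_le_reg_l (INR n)); [assumption|].
    replace (INR n * (K * / INR n)) with K by (field; lra). exact HpK.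
  - replace (Finite 0) with (Rbar_mult K (Rbar_inv p_infty)) by (simpl; f_equal; ring).
    apply is_lim_seq_scal_l, is_lim_seq_inv; [apply is_lim_seq_INR | discriminate].
Qed.

Lemma is_lim_seq_close (x y e : nat -> R) (C l : R) : is_lim_seq x l -> is_lim_seq e 0 ->
  eventually (fun n => Rabs (y n - x n) <= C * e n) -> is_lim_seq y l.
Proof.
  intros Hx He0 Hclose.
  assert (He : is_lim_seq (fun n => C * e n) 0).
  { replace (Finite 0) with (Rbar_mult C 0) by (simpl; f_equal; ring).
    apply is_lim_seq_scal_l, He0. }
  apply (is_lim_seq_le_le_loc (fun n => x n - C * e n) y (fun n => x n + C * e n)).
  - revert Hclose. apply filter_imp. intros n Hn. apply Rabs_le_between in Hn. lra.
  - replace l with (l - 0) by ring. apply (is_lim_seq_minus' _ _ _ _ Hx He).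
  - replace l with (l + 0) by ring. apply (is_lim_seq_plus' _ _ _ _ Hx He).
Qed.

Lemma is_lim_seq_of_decreasing_comp (H : R -> R) (k : nat -> R) (ks : R) :
  (forall x y, 0 <= x -> x < y -> H y < H x) -> 0 <= ks ->
  eventually (fun n => 0 <= k n) -> is_lim_seq (fun n => H (k n)) (H ks) ->
  is_lim_seq k ks.
Proof.
  intros Hdecr Hks Hk HHk.
  assert (Hle : forall x y, 0 <= x -> x <= y -> H y <= H x)
    by (intros x y Hx [Hxy | <-]; [left; apply Hdecr | right]; auto).
  apply is_lim_seq_spec in HHk. apply is_lim_seq_spec. intros eps.
  assert (Hup : eventually (fun n => k n < ks + eps)).
  { assert (Hgap : H (ks + eps) < H ks) by (apply Hdecr; [assumption | destruct eps; simpl; lra]).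
    generalize (filter_and _ _ Hk (HHk (mkposreal (H ks - H (ks + eps)) ltac:(lra)))).
    apply filter_imp. intros n [Hkn Hn]. simpl in Hn. apply Rabs_def2 in Hn.
    apply Rnot_le_lt. intros Hge. pose proof (Hle (ks + eps) (k n)).
    destruct eps; simpl in *; lra. }
  assert (Hlo : eventually (fun n => ks - eps < k n)).
  { destruct (Rlt_or_le (ks - eps) 0) as [Hneg | Hpos].
    - revert Hk. apply filter_imp. intros n Hkn. lra.
    - assert (Hgap : H ks < H (ks - eps)) by (apply Hdecr; [assumption | destruct eps; simpl; lra]).
      generalize (filter_and _ _ Hk (HHk (mkposreal (H (ks - eps) - H ks) ltac:(lra)))).
      apply filter_imp. intros n [Hkn Hn]. simpl in Hn. apply Rabs_def2 in Hn.
      apply Rnot_le_lt. intros Hge. pose proof (Hle (k n) (ks - eps) Hkn Hge). lra. }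
  generalize (filter_and _ _ Hup Hlo). apply filter_imp. intros n [H1 H2].
  apply Rabs_def1; lra.
Qed.

Lemma is_lim_seq_Rmin (u v : nat -> R) (lu lv : R) : is_lim_seq u lu -> is_lim_seq v lv ->
  is_lim_seq (fun n => Rmin (u n) (v n)) (Rmin lu lv).
Proof.
  intros Hu Hv. apply is_lim_seq_spec in Hu, Hv. apply is_lim_seq_spec. intros eps.
  generalize (filter_and _ _ (Hu eps) (Hv eps)). apply filter_imp. intros n [H1 H2].
  apply Rabs_def2 in H1, H2. apply Rabs_def1;
    unfold Rmin; destruct (Rle_dec (u n) (v n)); destruct (Rle_dec lu lv); lra.
Qed.

(* [E[1/(1+K)]] for [K] Poisson of mean [k], the limit of [Phi_n(c; 1)] when [n F(c) -> k]. *)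
Definition poisson_share (k : R) : R := if Req_dec_T k 0 then 1 else (1 - exp (- k)) / k.

Lemma poisson_share_0 : poisson_share 0 = 1.
Proof. unfold poisson_share. destruct (Req_dec_T 0 0); [reflexivity | lra]. Qed.

Lemma poisson_share_pos k : 0 < k -> poisson_share k = (1 - exp (- k)) / k.
Proof. intros Hk. unfold poisson_share. destruct (Req_dec_T k 0); [lra | reflexivity]. Qed.

Lemma poisson_share_lt_1 k : 0 < k -> poisson_share k < 1.
Proof.
  intros Hk. rewrite poisson_share_pos by exact Hk.
  pose proof (exp_ineq1 (- k) ltac:(lra)).
  apply (Rmult_lt_reg_r k); [exact Hk|]. unfold Rdiv. rewrite Rmult_assoc, Rinv_l by lra. lra.
Qed.

Lemma poisson_share_decr x y : 0 <= x -> x < y -> poisson_share y < poisson_share x.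
Proof.
  intros [Hx | <-] Hxy; [| rewrite poisson_share_0; apply poisson_share_lt_1; exact Hxy].
  rewrite !poisson_share_pos by lra.
  enough (- ((1 - exp (- x)) / x) < - ((1 - exp (- y)) / y)) by lra.
  (* The derivative of [k |-> -(1 - e^-k)/k] is [(e^k - 1 - k) e^-k / k^2 > 0]. *)
  apply (incr_function (fun k => - ((1 - exp (- k)) / k)) (Finite 0) p_infty
    (fun k => (1 - exp (- k) - k * exp (- k)) / (k * k))); simpl; try lra; [|].
  - intros k Hk _. auto_derive; [lra|]. field. lra.
  - intros k Hk _. apply Rlt_gt, Rdiv_lt_0_compat; [| nra].
    pose proof (exp_ineq1 k ltac:(lra)). pose proof (exp_pos (- k)).
    assert (exp (- k) * exp k = 1) by (rewrite <- exp_plus, Rplus_opp_l, exp_0; reflexivity).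
    nra.
Qed.

Lemma exists_pos_fixed_point a vbar : 0 < a -> a < vbar ->
  exists z, 0 < z /\ vbar * (1 - exp (- z)) / a = z.
Proof.
  intros Ha Hav. set (phi k := a * k - vbar * (1 - exp (- k))).
  set (r := vbar / a). assert (Hr : a * r = vbar) by (unfold r; field; lra).
  assert (Hr1 : 1 < r) by nra.
  set (k0 := (r - 1) / 2).
  assert (Hcont : continuity phi).
  { intros x. apply continuity_pt_filterlim, (ex_derive_continuous phi).
    unfold phi. auto_derive. lra. }
  assert (Hk0 : phi k0 < 0).
  { assert (H1 : exp (- k0) * (1 + k0) <= 1).
    { rewrite exp_Ropp. pose proof (exp_ineq1_le k0). pose proof (exp_pos k0).
      apply (Rmult_le_reg_l (exp k0)); [lra|]. rewrite <- Rmult_assoc, Rinv_r; lra. }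
    assert (Hk0pos : 0 < k0) by (unfold k0; lra).
    apply (Rmult_lt_reg_r (1 + k0)); [lra|]. unfold phi. rewrite Rmult_0_l.
    assert (a * (1 + k0) < vbar) by (unfold k0; nra). nra. }
  assert (Hphir : 0 < phi r) by (unfold phi; pose proof (exp_pos (- r)); nra).
  destruct (IVT phi k0 r Hcont ltac:(unfold k0; lra) Hk0 Hphir) as [z [Hz Hphiz]].
  exists z. split; [unfold k0 in Hz; lra|]. unfold phi in Hphiz.
  apply (Rmult_eq_reg_l a); [| lra].
  replace (a * (vbar * (1 - exp (- z)) / a)) with (vbar * (1 - exp (- z))) by (field; lra).
  lra.
Qed.

Lemma poisson_share_at_ka a vbar ka : 0 < a -> a <= vbar ->
  0 <= ka -> vbar * (1 - exp (- ka)) / a = ka ->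
  (forall k, 0 <= k -> vbar * (1 - exp (- k)) / a = k -> k <= ka) ->
  vbar * poisson_share ka = a.
Proof.
  intros Ha Hav [Hka | <-] Hfix Hmax.
  - rewrite poisson_share_pos by exact Hka.
    assert (Heq : vbar * (1 - exp (- ka)) = a * ka).
    { transitivity (a * (vbar * (1 - exp (- ka)) / a)); [field; lra | rewrite Hfix; reflexivity]. }
    unfold Rdiv. rewrite <- Rmult_assoc, Heq. field. lra.
  - rewrite poisson_share_0, Rmult_1_r. destruct Hav as [Hav | ->]; [| reflexivity].
    destruct (exists_pos_fixed_point a vbar Ha Hav) as [z [Hz Hfz]].
    specialize (Hmax z ltac:(lra) Hfz). lra.
Qed.

(* The limit of the sum in [Omega_n c] when [(n - 1) F(c) -> k]. *)
Definition poisson_payoff (L : nat) (w mu q : nat -> R) (k : R) : R :=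
  sumL L (fun l => w l * mu l * q l * exp (- q l * k)).

Lemma poisson_payoff_decr L w mu q x y :
  (forall l, (l < L)%nat -> 0 < mu l <= 1 /\ 0 < q l <= 1 /\ 0 <= w l) ->
  0 < sumL L (fun l => w l * mu l * q l) -> x < y ->
  poisson_payoff L w mu q y < poisson_payoff L w mu q x.
Proof.
  intros Hbugs HW Hxy. destruct (sumL_pos_term _ _ HW) as [l0 [Hl0 Hpos]].
  apply sumL_lt.
  - intros l Hl. destruct (Hbugs l Hl) as [[? ?] [[? ?] ?]].
    apply Rmult_le_compat_l; [apply Rmult_le_pos; [apply Rmult_le_pos|]; lra|].
    apply exp_le_compat. nra.
  - exists l0. split; [exact Hl0|]. destruct (Hbugs l0 Hl0) as [_ [[? _] _]].
    apply Rmult_lt_compat_l; [exact Hpos|]. apply exp_increasing. nra.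
Qed.

Section CostDistribution.

Variables (a : R) (ch : Rbar) (F f : R -> R).
Hypothesis Hch : Rbar_lt a ch.
Hypothesis HF : forall x, in_supp a ch x -> is_RInt f a x (F x).
Hypothesis Hf : forall x, in_supp a ch x -> 0 < f x.

Lemma in_supp_between x y t :
  in_supp a ch x -> in_supp a ch y -> x <= t <= y -> in_supp a ch t.
Proof.
  intros [Hx _] [_ Hy] Ht. split; [lra|].
  apply Rbar_le_trans with (Finite y); [simpl; lra | exact Hy].
Qed.

Lemma in_supp_lo : in_supp a ch a.
Proof. split; [apply Rle_refl | apply Rbar_lt_le, Hch]. Qed.

Lemma in_supp_le x t : in_supp a ch x -> a <= t <= x -> in_supp a ch t.
Proof. intros Hx Ht. exact (in_supp_between a x t in_supp_lo Hx Ht). Qed.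

Lemma in_supp_near_lo d : 0 < d -> exists x, in_supp a ch x /\ a < x < a + d.
Proof.
  intros Hd. destruct ch as [b| |]; simpl in Hch; [| | contradiction].
  - exists (a + Rmin d (b - a) / 2).
    pose proof (Rmin_l d (b - a)). pose proof (Rmin_r d (b - a)).
    assert (0 < Rmin d (b - a)) by (apply Rmin_glb_lt; lra).
    repeat split; simpl; lra.
  - exists (a + d / 2). repeat split; simpl; lra.
Qed.

Lemma is_RInt_F x y : in_supp a ch x -> in_supp a ch y -> is_RInt f x y (F y - F x).
Proof.
  intros Hx Hy.
  replace (F y - F x) with (plus (opp (F x)) (F y)) by (unfold plus, opp; simpl; ring).
  exact (is_RInt_Chasles f x a y _ _ (is_RInt_swap f x a _ (HF x Hx)) (HF y Hy)).
Qed.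

Lemma F_le x y : in_supp a ch x -> in_supp a ch y -> x <= y -> F x <= F y.
Proof.
  intros Hx Hy Hxy.
  enough (0 <= F y - F x) by lra.
  apply (is_RInt_ge_0 f x y); [exact Hxy | apply is_RInt_F; assumption |].
  intros t Ht. left. apply Hf, (in_supp_between x y); [assumption.. | lra].
Qed.

Lemma F_ge_0 x : in_supp a ch x -> 0 <= F x.
Proof.
  intros Hx. apply (is_RInt_ge_0 f a x); [apply Hx | apply HF, Hx |].
  intros t Ht. left. apply Hf, (in_supp_le x); [assumption | lra].
Qed.

Lemma F_gt_0 x : in_supp a ch x -> a < x -> 0 < F x.
Proof.
  intros Hx Hax. rewrite <- (is_RInt_unique f a x (F x) (HF x Hx)).
  apply RInt_gt_0_of_pos; [exact Hax | exists (F x); apply HF, Hx |].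
  intros t Ht. apply Hf, (in_supp_le x); [assumption | lra].
Qed.

Hypothesis HF_mass : is_lim F ch 1.

Lemma F_le_1_below x : in_supp a ch x -> Rbar_lt x ch -> F x <= 1.
Proof.
  intros Hx Hxch. apply Rnot_lt_le. intros H1.
  pose proof (proj2 (is_lim_spec F ch 1) HF_mass (mkposreal (F x - 1) ltac:(lra))) as Hnear.
  simpl in Hnear.
  enough (exists y, in_supp a ch y /\ x <= y /\ Rabs (F y - 1) < F x - 1) as [y [Hy [Hxy HFy]]].
  { pose proof (F_le x y Hx Hy Hxy). apply Rabs_def2 in HFy. lra. }
  destruct Hx as [Hax _]. destruct ch as [b| |]; simpl in Hxch, Hnear; [| | contradiction].
  - destruct Hnear as [d Hd]. set (y := Rmax x (b - d / 2)).
    assert (x <= y) by apply Rmax_l. assert (b - d / 2 <= y) by apply Rmax_r.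
    assert (y < b) by (apply Rmax_lub_lt; destruct d; simpl; lra).
    exists y. repeat split; simpl; try lra.
    apply Hd; [| lra]. change (Rabs (y - b) < d). apply Rabs_def1; destruct d; simpl in *; lra.
  - destruct Hnear as [M HM]. set (y := Rmax x M + 1).
    assert (x < y) by (pose proof (Rmax_l x M); unfold y; lra).
    assert (M < y) by (pose proof (Rmax_r x M); unfold y; lra).
    exists y. repeat split; simpl; try lra. apply HM. lra.
Qed.

Lemma F_le_1 x : in_supp a ch x -> F x <= 1.
Proof.
  intros Hx. destruct (Rbar_le_lt_or_eq_dec _ _ (proj2 Hx)) as [Hlt | Heq];
    [apply F_le_1_below; assumption |].
  (* At a finite right end [x] of the support, [F] is left-continuous since [f] is bounded. *)
  assert (Hax : a < x) by (rewrite <- Heq in Hch; exact Hch).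
  destruct (ex_RInt_ub f a x (ex_intro _ _ (HF x Hx))) as [M HM].
  rewrite Rmin_left, Rmax_right in HM by lra.
  assert (HfM : forall t, a <= t <= x -> f t <= M).
  { intros t Ht. specialize (HM t Ht). change (Rabs (f t) <= M) in HM.
    pose proof (Rle_abs (f t)). lra. }
  assert (HM0 : 0 <= M) by (pose proof (HfM x ltac:(lra)); pose proof (Hf x Hx); lra).
  apply Rle_plus_epsilon. intros eps Heps.
  set (y := Rmax a (x - eps / (M + 1))).
  assert (Hy1 : a <= y) by apply Rmax_l. assert (Hy2 : x - eps / (M + 1) <= y) by apply Rmax_r.
  assert (Hd : 0 < eps / (M + 1)) by (apply Rdiv_lt_0_compat; lra).
  assert (Hyx : y < x) by (apply Rmax_lub_lt; lra).
  assert (Hy : in_supp a ch y) by (apply (in_supp_le x); [assumption | lra]).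
  assert (HFy : F y <= 1) by (apply F_le_1_below; [exact Hy | rewrite <- Heq; simpl; exact Hyx]).
  assert (Hint : F x - F y <= scal (x - y) M).
  { apply (is_RInt_le f (fun _ => M) y x); [lra | apply is_RInt_F; assumption |
      apply (is_RInt_const (V := R_NormedModule)) | intros t Ht; apply HfM; lra]. }
  change (F x - F y <= (x - y) * M) in Hint.
  assert ((x - y) * M <= eps / (M + 1) * M) by (apply Rmult_le_compat_r; lra).
  assert (eps / (M + 1) * M <= eps)
    by (apply (Rmult_le_reg_r (M + 1)); [lra | field_simplify; nra]).
  lra.
Qed.

Lemma is_lim_seq_lo_of_F (c : nat -> R) : eventually (fun n => in_supp a ch (c n)) ->
  is_lim_seq (fun n => F (c n)) 0 -> is_lim_seq c a.
Proof.
  intros Hc HFc. apply is_lim_seq_spec. intros eps.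
  destruct (in_supp_near_lo eps (cond_pos eps)) as [x1 [Hx1 [Hax1 Hx1a]]].
  pose proof (proj2 (is_lim_seq_spec _ _) HFc (mkposreal _ (F_gt_0 x1 Hx1 Hax1))) as Hsmall.
  generalize (filter_and _ _ Hc Hsmall). apply filter_imp. intros n [Hn HFn]. simpl in HFn.
  rewrite Rminus_0_r in HFn.
  assert (c n < x1).
  { apply Rnot_le_lt. intros Hle. pose proof (F_le x1 (c n) Hx1 Hn Hle).
    pose proof (Rle_abs (F (c n))). lra. }
  destruct Hn as [Hn _]. rewrite Rabs_pos_eq; lra.
Qed.

Hypothesis Hreg : forall x y, in_supp a ch x -> in_supp a ch y -> x <= y ->
  F x / f x <= F y / f y.

(* If [F/f >= eps] on some [(a, y]] with [y - a < eps], then [f <= F y / eps] there,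
   whence [F y = int_a^y f < F y]. *)
Lemma F_div_f_small_near_lo eps : 0 < eps ->
  exists t, in_supp a ch t /\ a < t /\ F t / f t < eps.
Proof.
  intros Heps. destruct (in_supp_near_lo eps Heps) as [y [Hy [Hay Hya]]].
  apply NNPP. intros Hno.
  assert (Hbound : forall t, a < t < y -> f t <= F y / eps).
  { intros t Ht.
    assert (Hts : in_supp a ch t) by (apply (in_supp_le y); [assumption | lra]).
    assert (HGt : eps <= F t / f t)
      by (apply Rnot_lt_le; intros Hlt; apply Hno; exists t; tauto).
    pose proof (Hf t Hts). pose proof (F_le t y Hts Hy ltac:(lra)).
    apply (Rmult_le_reg_l eps); [lra|].
    apply (Rmult_le_compat_r (f t)) in HGt; [|lra].
    unfold Rdiv in *. rewrite Rmult_assoc, Rinv_l in HGt by lra.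
    replace (eps * (F y * / eps)) with (F y) by (field; lra). lra. }
  assert (Hint : F y <= scal (y - a) (F y / eps)).
  { apply (is_RInt_le f (fun _ => F y / eps) a y); [lra | apply HF, Hy |
      apply (is_RInt_const (V := R_NormedModule)) | exact Hbound]. }
  change (F y <= (y - a) * (F y / eps)) in Hint.
  pose proof (F_gt_0 y Hy Hay).
  assert ((y - a) * (F y / eps) < F y).
  { unfold Rdiv. apply (Rmult_lt_reg_r eps); [lra|].
    replace ((y - a) * (F y * / eps) * eps) with ((y - a) * F y) by (field; lra). nra. }
  lra.
Qed.

Lemma is_lim_seq_F_div_f (c : nat -> R) : eventually (fun n => in_supp a ch (c n)) ->
  is_lim_seq c a -> is_lim_seq (fun n => F (c n) / f (c n)) 0.
Proof.
  intros Hc Hlim. apply is_lim_seq_spec. intros eps.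
  destruct (F_div_f_small_near_lo eps (cond_pos eps)) as [t [Ht [Hat HGt]]].
  pose proof (proj2 (is_lim_seq_spec _ _) Hlim (mkposreal (t - a) ltac:(lra))) as Hnear.
  generalize (filter_and _ _ Hc Hnear). apply filter_imp. intros n [Hn Hcn]. simpl in Hcn.
  apply Rabs_def2 in Hcn.
  pose proof (Hreg (c n) t Hn Ht ltac:(lra)).
  assert (0 <= F (c n) / f (c n)) by (apply Rdiv_le_0_compat; [apply F_ge_0 | apply Hf]; exact Hn).
  rewrite Rminus_0_r, Rabs_pos_eq; lra.
Qed.

Lemma scal_F_Rmin r x y : 0 <= r -> in_supp a ch x -> in_supp a ch y ->
  r * F (Rmin x y) = Rmin (r * F x) (r * F y).
Proof.
  intros Hr Hx Hy. destruct (Rle_dec x y) as [Hxy | Hyx].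
  - rewrite !Rmin_left; [reflexivity | | exact Hxy].
    apply Rmult_le_compat_l; [exact Hr | apply F_le; assumption].
  - rewrite !Rmin_right; [reflexivity | | lra].
    apply Rmult_le_compat_l; [exact Hr | apply F_le; [assumption.. | lra]].
Qed.

Hypothesis Ha : 0 < a.

Section PublicProgram.

Variable vbar : R.
Hypothesis Hav : a <= vbar.

Lemma ca_bounds n c : (1 <= n)%nat -> in_supp a ch c -> vbar * Phi n F c 1 = c ->
  INR n * F c <= vbar / a /\
  vbar * poisson_share (INR n * F c) <= c <= vbar * poisson_share (INR n * F c) + vbar * F c.
Proof.
  intros Hn Hc Hfix.
  pose proof (F_ge_0 c Hc). pose proof (F_le_1 c Hc). pose proof (proj1 Hc).
  assert (Hn0 : 0 < INR n) by (apply lt_0_INR; lia).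
  assert (Hk : c * (INR n * F c) = vbar * (1 - (1 - F c) ^ n)).
  { rewrite <- (Phi_mul n F c Hn), <- Hfix at 1. ring. }
  set (p := F c) in *. set (k := INR n * p) in *.
  destruct (one_sub_pow_bounds p n ltac:(lra)) as [Hlo Hhi]. fold k in Hlo, Hhi.
  replace (INR n * (p * p)) with (k * p) in Hlo by (unfold k; ring).
  assert (0 <= (1 - p) ^ n) by (apply pow_le; lra).
  split.
  { apply (Rmult_le_reg_l a); [exact Ha|]. replace (a * (vbar / a)) with vbar by (field; lra).
    assert (0 <= k) by (unfold k; nra). nra. }
  destruct (Req_dec p 0) as [Hp0 | Hp0].
  - assert (Hk0 : k = 0) by (unfold k; rewrite Hp0; ring).
    rewrite Hk0, poisson_share_0, Hp0. rewrite Phi_F_zero in Hfix by assumption. lra.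
  - assert (Hkpos : 0 < k) by (unfold k; apply Rmult_lt_0_compat; lra).
    rewrite poisson_share_pos by exact Hkpos.
    split; apply (Rmult_le_reg_r k); try exact Hkpos.
    + replace (vbar * ((1 - exp (- k)) / k) * k) with (vbar * (1 - exp (- k))) by (field; lra).
      nra.
    + replace ((vbar * ((1 - exp (- k)) / k) + vbar * p) * k)
        with (vbar * (1 - exp (- k)) + vbar * (k * p)) by (field; lra).
      nra.
Qed.

Lemma is_lim_seq_ca ka (ca : nat -> R) :
  0 <= ka -> vbar * (1 - exp (- ka)) / a = ka ->
  (forall k, 0 <= k -> vbar * (1 - exp (- k)) / a = k -> k <= ka) ->
  eventually (fun n => (1 <= n)%nat /\ in_supp a ch (ca n) /\ vbar * Phi n F (ca n) 1 = ca n) ->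
  is_lim_seq (fun n => INR n * F (ca n)) ka.
Proof.
  intros Hka Hfix Hmax Hev.
  assert (Hbounds : eventually (fun n => in_supp a ch (ca n) /\ INR n * F (ca n) <= vbar / a /\
      vbar * poisson_share (INR n * F (ca n)) <= ca n <=
      vbar * poisson_share (INR n * F (ca n)) + vbar * F (ca n))).
  { revert Hev. apply filter_imp. intros n [Hn [Hc Hfn]]. split; [exact Hc|].
    apply ca_bounds; assumption. }
  assert (Hsupp : eventually (fun n => in_supp a ch (ca n)))
    by (revert Hbounds; apply filter_imp; tauto).
  assert (HF0 : is_lim_seq (fun n => F (ca n)) 0).
  { apply (is_lim_seq_0_of_INR_mul_le _ (vbar / a)). revert Hbounds. apply filter_imp.
    intros n [Hc [HK _]]. split; [apply F_ge_0, Hc | exact HK]. }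
  assert (Hca : is_lim_seq ca a) by (apply is_lim_seq_lo_of_F; assumption).
  assert (Hshare : is_lim_seq (fun n => vbar * poisson_share (INR n * F (ca n))) a).
  { apply (is_lim_seq_close ca _ _ vbar a Hca HF0). revert Hbounds. apply filter_imp.
    intros n [_ [_ Hb]]. rewrite Rabs_minus_sym. apply Rabs_le. lra. }
  rewrite <- (poisson_share_at_ka a vbar ka Ha Hav Hka Hfix Hmax) in Hshare.
  apply (is_lim_seq_of_decreasing_comp (fun k => vbar * poisson_share k));
    [| exact Hka | | exact Hshare].
  - intros x y Hx Hxy. apply Rmult_lt_compat_l; [lra | apply poisson_share_decr; assumption].
  - revert Hsupp. apply filter_imp. intros n Hn.
    apply Rmult_le_pos; [apply pos_INR | apply F_ge_0, Hn].
Qed.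

End PublicProgram.

Section PrivateProgram.

Variables (L : nat) (w mu q : nat -> R).
Hypothesis Hbugs : forall l, (l < L)%nat -> 0 < mu l <= 1 /\ 0 < q l <= 1 /\ 0 <= w l.
Let W := sumL L (fun l => w l * mu l * q l).

Lemma ct_bounds n c : in_supp a ch c -> Omega L w mu q F f n c = c ->
  poisson_payoff L w mu q (INR (n - 1) * F c) - W * (INR (n - 1) * F c * F c)
    <= c + F c / f c <= poisson_payoff L w mu q (INR (n - 1) * F c).
Proof.
  intros Hc Hfix. unfold Omega in Hfix.
  pose proof (F_ge_0 c Hc). pose proof (F_le_1 c Hc).
  set (m := (n - 1)%nat) in *. set (p := F c) in *.
  assert (Hterm : forall l, (l < L)%nat ->
    0 <= w l * mu l * q l /\
    exp (- q l * (INR m * p)) - INR m * p * p <= (1 - q l * p) ^ m <= exp (- q l * (INR m * p))).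
  { intros l Hl. destruct (Hbugs l Hl) as [[? ?] [[? ?] ?]].
    split; [apply Rmult_le_pos; [apply Rmult_le_pos|]; lra|].
    replace (- q l * (INR m * p)) with (- (INR m * (q l * p))) by ring.
    destruct (one_sub_pow_bounds (q l * p) m ltac:(split; nra)) as [Hlo Hhi].
    assert (INR m * (q l * p * (q l * p)) <= INR m * p * p).
    { replace (INR m * p * p) with (INR m * (p * p)) by ring.
      apply Rmult_le_compat_l; [apply pos_INR|].
      assert (0 <= q l * p <= p) by (split; nra). nra. }
    lra. }
  replace (c + p / f c) with (sumL L (fun l => w l * mu l * q l * (1 - q l * p) ^ m)) by lra.
  split.
  - replace (poisson_payoff L w mu q (INR m * p) - W * (INR m * p * p))
      with (sumL L (fun l => w l * mu l * q l * exp (- q l * (INR m * p)) +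
                             - (INR m * p * p) * (w l * mu l * q l)))
      by (rewrite sumL_plus_scal; unfold poisson_payoff, W; ring).
    apply sumL_le. intros l Hl. destruct (Hterm l Hl) as [Hw [Hlo _]]. nra.
  - apply sumL_le. intros l Hl. destruct (Hterm l Hl) as [Hw [_ Hhi]].
    apply Rmult_le_compat_l; assumption.
Qed.

Variable kt : R.
Hypothesis HW : a <= W.
Hypothesis Hpay : poisson_payoff L w mu q kt = a.

Lemma ct_index_le n c : in_supp a ch c -> Omega L w mu q F f n c = c ->
  INR (n - 1) * F c <= kt.
Proof.
  intros Hc Hfix. destruct (ct_bounds n c Hc Hfix) as [_ Hhi].
  assert (0 <= F c / f c) by (apply Rdiv_le_0_compat; [apply F_ge_0 | apply Hf]; exact Hc).
  (* [payoff ((n - 1) F c) >= c + F c / f c >= a = payoff kt]. *)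
  apply Rnot_lt_le. intros Hlt.
  pose proof (poisson_payoff_decr L w mu q _ _ Hbugs ltac:(fold W; lra) Hlt).
  pose proof (proj1 Hc). lra.
Qed.

Lemma is_lim_seq_ct (ct : nat -> R) : 0 <= kt ->
  eventually (fun n => (1 <= n)%nat /\ in_supp a ch (ct n) /\ Omega L w mu q F f n (ct n) = ct n) ->
  is_lim_seq (fun n => INR n * F (ct n)) kt.
Proof.
  intros Hkt Hev. set (k n := INR (n - 1) * F (ct n)).
  assert (Hb : eventually (fun n => (1 <= n)%nat /\ in_supp a ch (ct n) /\ 0 <= k n <= kt /\
      poisson_payoff L w mu q (k n) - W * (k n * F (ct n)) <= ct n + F (ct n) / f (ct n) /\
      ct n + F (ct n) / f (ct n) <= poisson_payoff L w mu q (k n))).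
  { revert Hev. apply filter_imp. intros n [Hn [Hc Hfix]].
    pose proof (ct_bounds n (ct n) Hc Hfix). pose proof (ct_index_le n (ct n) Hc Hfix).
    assert (0 <= k n) by (apply Rmult_le_pos; [apply pos_INR | apply F_ge_0, Hc]).
    split; [exact Hn | split; [exact Hc | split; [split | ]; assumption]]. }
  assert (Hsupp : eventually (fun n => in_supp a ch (ct n)))
    by (revert Hb; apply filter_imp; tauto).
  assert (Hsplit : eventually (fun n => INR n * F (ct n) = k n + F (ct n))).
  { revert Hb. apply filter_imp. intros n [Hn _]. unfold k. rewrite minus_INR by exact Hn.
    simpl. ring. }
  assert (HF0 : is_lim_seq (fun n => F (ct n)) 0).
  { apply (is_lim_seq_0_of_INR_mul_le _ (kt + 1)).
    generalize (filter_and _ _ Hb Hsplit). apply filter_imp. intros n [[_ [Hc [Hk _]]] ->].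
    pose proof (F_le_1 _ Hc). split; [apply F_ge_0, Hc | lra]. }
  assert (Hc : is_lim_seq ct a) by (apply is_lim_seq_lo_of_F; assumption).
  assert (Hx : is_lim_seq (fun n => ct n + F (ct n) / f (ct n)) a).
  { pose proof (is_lim_seq_plus' _ _ _ _ Hc (is_lim_seq_F_div_f ct Hsupp Hc)) as Hsum.
    rewrite Rplus_0_r in Hsum. exact Hsum. }
  assert (Hpayk : is_lim_seq (fun n => poisson_payoff L w mu q (k n)) a).
  { apply (is_lim_seq_close _ _ _ (W * kt) a Hx HF0). revert Hb. apply filter_imp.
    intros n [_ [Hc' [Hk [Hlo Hhi]]]]. pose proof (F_ge_0 _ Hc').
    assert (W * (k n * F (ct n)) <= W * kt * F (ct n)).
    { rewrite Rmult_assoc. apply Rmult_le_compat_l; [lra | apply Rmult_le_compat_r; lra]. }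
    apply Rabs_le. lra. }
  rewrite <- Hpay in Hpayk.
  assert (Hk : is_lim_seq k kt).
  { apply (is_lim_seq_of_decreasing_comp (poisson_payoff L w mu q)); try assumption.
    - intros x y _ Hxy. apply poisson_payoff_decr; [exact Hbugs | fold W; lra | exact Hxy].
    - revert Hb. apply filter_imp. intros n Hn. apply Hn. }
  apply (is_lim_seq_ext_loc (fun n => k n + F (ct n))).
  - revert Hsplit. apply filter_imp. intros n Hn. symmetry. exact Hn.
  - pose proof (is_lim_seq_plus' _ _ _ _ Hk HF0) as Hsum. rewrite Rplus_0_r in Hsum. exact Hsum.
Qed.

End PrivateProgram.
End CostDistribution.

Theorem lemma7
  (* bugs *)
  (L : nat) (w mu q : nat -> R)
  (Hbugs : forall l, (l < L)%nat -> 0 < mu l <= 1 /\ 0 < q l <= 1 /\ 0 <= w l)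
  (* cost distribution *)
  (c_lo : R) (c_hi : Rbar) (F f : R -> R)
  (Hclo : 0 < c_lo) (Hchi : Rbar_lt (Finite c_lo) c_hi)
  (HF_below : forall x, x < c_lo -> F x = 0)
  (HF_dens : forall x, in_supp c_lo c_hi x -> is_RInt f c_lo x (F x))
  (HF_above : forall x, Rbar_lt c_hi (Finite x) -> F x = 1)
  (HF_mass : is_lim F c_hi 1)
  (Hf_pos : forall x, in_supp c_lo c_hi x -> 0 < f x)
  (Hreg : forall x y, in_supp c_lo c_hi x -> in_supp c_lo c_hi y -> x <= y ->
            F x / f x <= F y / f y)
  (* budget *)
  (vbar : R) (Hv : 0 < vbar) (Hvc : c_lo <= vbar)
  (Hsum : c_lo <= sumL L (fun l => w l * mu l * q l))
  (* c~_n : the unique fixed point of Omega_n *)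
  (ct : nat -> R)
  (Hct : exists N, forall n, (N <= n)%nat -> (1 <= n)%nat ->
     in_supp c_lo c_hi (ct n) /\ Omega L w mu q F f n (ct n) = ct n /\
     (forall c, in_supp c_lo c_hi c -> Omega L w mu q F f n c = c -> c = ct n))
  (* c_{a,n}(vbar) : the unique fixed point of c |-> vbar * Phi_n(c; 1) *)
  (ca : nat -> R)
  (Hca : exists N, forall n, (N <= n)%nat -> (1 <= n)%nat ->
     in_supp c_lo c_hi (ca n) /\ vbar * Phi n F (ca n) 1 = ca n /\
     (forall c, in_supp c_lo c_hi c -> vbar * Phi n F c 1 = c -> c = ca n))
  (* kappa~ : the unique root in [0,oo) of sum_l w mu q e^{-q k} - c_lo *)
  (kt : R)
  (Hkt : 0 <= kt /\
     sumL L (fun l => w l * mu l * q l * exp (- q l * kt)) - c_lo = 0 /\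
     (forall k, 0 <= k ->
        sumL L (fun l => w l * mu l * q l * exp (- q l * k)) - c_lo = 0 -> k = kt))
  (* kappa_a(vbar) : the largest fixed point in [0,oo) of k |-> vbar (1 - e^{-k}) / c_lo *)
  (ka : R)
  (Hka : 0 <= ka /\ vbar * (1 - exp (- ka)) / c_lo = ka /\
     (forall k, 0 <= k -> vbar * (1 - exp (- k)) / c_lo = k -> k <= ka)) :
  is_lim_seq (fun n => INR n * F (Rmin (ct n) (ca n))) (Rmin kt ka).
Proof.
  assert (Hev_ct : eventually (fun n => (1 <= n)%nat /\ in_supp c_lo c_hi (ct n) /\
                                        Omega L w mu q F f n (ct n) = ct n)).
  { destruct Hct as [N HN]. exists (Nat.max N 1). intros n Hn.
    destruct (HN n ltac:(lia) ltac:(lia)) as [Hs [Hfix _]]. split; [lia | split; assumption]. }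
  assert (Hev_ca : eventually (fun n => (1 <= n)%nat /\ in_supp c_lo c_hi (ca n) /\
                                        vbar * Phi n F (ca n) 1 = ca n)).
  { destruct Hca as [N HN]. exists (Nat.max N 1). intros n Hn.
    destruct (HN n ltac:(lia) ltac:(lia)) as [Hs [Hfix _]]. split; [lia | split; assumption]. }
  destruct Hkt as [Hkt0 [Hkt_root _]]. destruct Hka as [Hka0 [Hka_fix Hka_max]].
  pose proof (is_lim_seq_ct c_lo c_hi F f Hchi HF_dens Hf_pos HF_mass Hreg Hclo
    L w mu q Hbugs kt Hsum ltac:(unfold poisson_payoff; lra) ct Hkt0 Hev_ct) as Hlim_ct.
  pose proof (is_lim_seq_ca c_lo c_hi F f Hchi HF_dens Hf_pos HF_mass Hclo
    vbar Hvc ka ca Hka0 Hka_fix Hka_max Hev_ca) as Hlim_ca.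
  apply (is_lim_seq_ext_loc (fun n => Rmin (INR n * F (ct n)) (INR n * F (ca n))));
    [| apply is_lim_seq_Rmin; assumption].
  generalize (filter_and _ _ Hev_ct Hev_ca). apply filter_imp.
  intros n [[_ [Hs_ct _]] [_ [Hs_ca _]]]. symmetry.
  apply (scal_F_Rmin c_lo c_hi F f HF_dens Hf_pos); [apply pos_INR | assumption..].
Qed.
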